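(* Consider Matching Pennies in the unconstrained setting with the Euclidean regularizer, and suppose both players use OFTRL (optimistic weight $n=1$) with any time delay $m\ge 1$, started from an initial condition that is not the equilibrium (i.e. $(\Delta x_1^1,\Delta x_2^1)\neq(0,0)$ where $\Delta x_i^t=\langle\boldsymbol{x}_i^t,\mathbf{c}\rangle$). Then with learning rate $\eta=O(1/\sqrt{T})$ (sufficiently small), the total regret satisfies $\textsc{RegTot}(T)=\Omega(\sqrt{T})$, treating the size $D$ of the comparator set as a constant.
   Context: Matching Pennies: two players with $\boldsymbol{u}_1=\boldsymbol{A}\boldsymbol{x}_2$, $\boldsymbol{u}_2=-\boldsymbol{A}^{\rm T}\boldsymbol{x}_1$, $\boldsymbol{A}=\begin{pmatrix}1&-1\\-1&1\end{pmatrix}=\mathbf{c}\mathbf{c}^{\rm T}$, $\mathbf{c}=(1,-1)^{\rm T}$. Unconstrained setting: strategies $\boldsymbol{x}_i\in\mathbb{R}^2$. Euclidean regularizer $h(\boldsymbol{x})=\|\boldsymbol{x}\|_2^2/2$. Time-delayed weighted optimistic FTRL with delay $m\in\mathbb{N}$ and weight $n\in\mathbb{N}$ (OFTRL is the case $n=1$): with $\boldsymbol{u}_i^t=\boldsymbol{u}_i(\boldsymbol{x}^t)$ for $t\ge1$ and $\boldsymbol{u}_i^t=\boldsymbol{0}$ for $t\le0$, the strategies evolve by $\boldsymbol{x}_i^{t+1}=\boldsymbol{x}_i^{t}+\eta\boldsymbol{u}_i^{t-m}+n\eta(\boldsymbol{u}_i^{t-m}-\boldsymbol{u}_i^{t-m-1})$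 (the unconstrained Euclidean form of $\boldsymbol{x}_i^{t+1}=\arg\max_{\boldsymbol{x}}\eta\langle\boldsymbol{x},\sum_{s=1}^{t-m}\boldsymbol{u}_i^s+n\boldsymbol{u}_i^{t-m}\rangle-h(\boldsymbol{x})$). Total regret: $\textsc{RegTot}(T)=\max_{\boldsymbol{x}}\sum_{i=1,2}\sum_{t=1}^{T}\langle\boldsymbol{x}_i-\boldsymbol{x}_i^t,\boldsymbol{u}_i^t\rangle$, where in the unconstrained setting the comparator $\boldsymbol{x}_i$ ranges over $\{\boldsymbol{x}_i:\|\boldsymbol{x}_i\|_1\le \frac1T\sum_{t=1}^T\|\boldsymbol{x}_i^t\|_1\}$, and $D:=\min_{i}\|\boldsymbol{x}_i\|_1$ for the maximizing comparator. *)

From HB Require Import structures.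
From mathcomp Require Import all_boot all_order all_algebra.
From mathcomp Require Import classical_sets reals.
Set Implicit Arguments. Unset Strict Implicit. Unset Printing Implicit Defensive.
Import Order.TTheory GRing.Theory Num.Theory.
Local Open Scope ring_scope.

Definition mp_c {R : realType} : 'cV[R]_2 :=
  \col_(i < 2) (if i == 0 :> nat then 1 else -1).
Definition mp_A {R : realType} : 'M[R]_2 := mp_c *m mp_c^T.

Definition dot {R : realType} (a b : 'cV[R]_2) : R := \sum_(j < 2) a j 0 * b j 0.
Definition l1 {R : realType} (a : 'cV[R]_2) : R := \sum_(j < 2) `|a j 0|.

(* Utilities u_1^t = A x_2^t, u_2^t = - A^T x_1^t for t >= 1, and u_i^t = 0
   for t <= 0.  Time is indexed by nat; all non-positive times are collapsed
   to index 0 (so truncated subtraction t - m on nat gives the right value). *)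
Definition util1 {R : realType} (x2 : nat -> 'cV[R]_2) (t : nat) : 'cV[R]_2 :=
  if t is 0 then 0 else mp_A *m x2 t.
Definition util2 {R : realType} (x1 : nat -> 'cV[R]_2) (t : nat) : 'cV[R]_2 :=
  if t is 0 then 0 else - (mp_A^T *m x1 t).

(* (x1, x2) is the trajectory of time-delayed weighted optimistic FTRL with
   delay m, weight n, learning rate eta, Euclidean regularizer, unconstrained,
   started at (x1 1, x2 1) = (y1, y2):
   x_i^{t+1} = x_i^t + eta u_i^{t-m} + n eta (u_i^{t-m} - u_i^{t-m-1}), t >= 1. *)
Definition oftrl_traj {R : realType} (m n : nat) (eta : R) (y1 y2 : 'cV[R]_2)
    (x1 x2 : nat -> 'cV[R]_2) : Prop :=
  [/\ x1 1%N = y1, x2 1%N = y2 &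
   forall t : nat, (1 <= t)%N ->
     x1 t.+1 = x1 t + eta *: util1 x2 (t - m) +
               (n%:R * eta) *: (util1 x2 (t - m) - util1 x2 (t - m.+1)) /\
     x2 t.+1 = x2 t + eta *: util2 x1 (t - m) +
               (n%:R * eta) *: (util2 x1 (t - m) - util2 x1 (t - m.+1))].

Definition radius {R : realType} (T : nat) (x : nat -> 'cV[R]_2) : R :=
  (T%:R)^-1 * \sum_(1 <= t < T.+1) l1 (x t).

(* Total regret:
   RegTot(T) = max_{||y_i||_1 <= radius_i} sum_i sum_{t=1}^T <y_i - x_i^t, u_i^t>
   (the set is compact, so the supremum is the maximum). *)
Definition RegTot {R : realType} (T : nat) (x1 x2 : nat -> 'cV[R]_2) : R :=
  sup [set r : R | exists y1 y2 : 'cV[R]_2,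
        [/\ l1 y1 <= radius T x1, l1 y2 <= radius T x2 &
            r = \sum_(1 <= t < T.+1)
                  (dot (y1 - x1 t) (util1 x2 t) + dot (y2 - x2 t) (util2 x1 t))]].

(* D = min_i ||y_i||_1 for the maximizing comparator = min of the two radii *)
Definition Dsize {R : realType} (T : nat) (x1 x2 : nat -> 'cV[R]_2) : R :=
  Num.min (radius T x1) (radius T x2).

From HB Require Import structures.
From mathcomp Require Import all_boot all_order all_algebra.
From mathcomp Require Import classical_sets reals.
From mathcomp Require Import ring lra zify.
Import Order.TTheory GRing.Theory Num.Theory.
Local Open Scope ring_scope.

(* Because A = c c^T, only the scalar projections a_t = <x_1^t, c> and
   b_t = <x_2^t, c> matter: with h = 2 eta they follow the delayed rotation
     a_{t+1} = a_t + h (2 b_{t-m} - b_{t-m-1}),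
     b_{t+1} = b_t - h (2 a_{t-m} - a_{t-m-1}),
   and the regret against the best comparator is at least
   D (|sum_t a_t| + |sum_t b_t|).  For small h the delay makes the energy
   a_t^2 + b_t^2 grow by the factor 1 + (2m - 1) h^2 per step, up to O(h^3):
   the optimistic correction is not enough to compensate a delay m >= 1.
   Over T steps the energy thus gains about T h^2 (a_1^2 + b_1^2), while
   summing the recurrence shows that a_{T+1} - a_1 is h times the partial sum
   of the b_t up to a bounded error, and symmetrically for b.  Hence the
   partial sums are of order T h = 2 k sqrt T when eta = k / sqrt T. *)

(* [zext a (t - m)] is a_{t-m} with a_s = 0 for s <= 0: truncated subtraction
   sends every nonpositive time to 0. *)
Definition zext {V : zmodType} (a : nat -> V) (r : nat) : V :=
  if r is 0 then 0 else a r.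

Definition feedback {R : ringType} (m : nat) (a : nat -> R) (t : nat) : R :=
  2 * zext a (t - m) - zext a (t - m.+1).

Definition delayed_rotation {R : ringType} (m : nat) (h : R) (a b : nat -> R) :=
  forall t, (1 <= t)%N ->
    a t.+1 = a t + h * feedback m b t /\ b t.+1 = b t - h * feedback m a t.

Definition bounded_upto {R : numDomainType} (a b : nat -> R) (t : nat) (G : R) :=
  forall r, (0 < r)%N -> (r <= t)%N -> `|a r| <= G /\ `|b r| <= G.

Definition energy {R : ringType} (a b : nat -> R) (t : nat) : R :=
  a t ^+ 2 + b t ^+ 2.

Lemma zext_pos {V : zmodType} (a : nat -> V) r : (0 < r)%N -> zext a r = a r.
Proof. by case: r. Qed.

Lemma sum_zext_shift {V : zmodType} (b : nat -> V) (j T : nat) :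
  \sum_(1 <= t < T.+1) zext b (t - j) + \sum_(i < j) zext b (T - i)
    = \sum_(1 <= t < T.+1) b t.
Proof.
elim: T => [|T IH].
  by rewrite !big_geq // add0r big1 // => i _; rewrite sub0n.
have shift : zext b (T.+1 - j) + \sum_(i < j) zext b (T.+1 - i)
    = b T.+1 + \sum_(i < j) zext b (T - i).
  transitivity (\sum_(i < j.+1) zext b (T.+1 - i)); first by rewrite big_ord_recr addrC.
  by rewrite big_ord_recl; congr (_ + _); apply: eq_bigr.
by rewrite big_nat_recr //= [RHS]big_nat_recr //= -IH -addrA shift addrCA addrC.
Qed.

Lemma sum_feedback {R : comRingType} (m : nat) (b : nat -> R) (T : nat) :
  \sum_(1 <= t < T.+1) feedback m b t
    = \sum_(1 <= t < T.+1) b t - \sum_(i < m) zext b (T - i) + zext b (T - m).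
Proof.
have e2 := sum_zext_shift b m.+1 T; rewrite big_ord_recr /= in e2.
rewrite /feedback sumrB -mulr_sumr.
have -> : \sum_(1 <= t < T.+1) zext b (t - m.+1)
    = \sum_(1 <= t < T.+1) b t - (\sum_(i < m) zext b (T - i) + zext b (T - m)).
  by rewrite -e2 addrK.
by rewrite -(sum_zext_shift b m T); ring.
Qed.

Lemma ler_norm_sqr {R : realDomainType} (x y : R) :
  0 <= y -> (`|x| <= y) = (x ^+ 2 <= y ^+ 2).
Proof. by move=> y0; rewrite -real_normK ?num_real // ler_sqr ?nnegrE ?normr_ge0. Qed.

Lemma sqr_add_le_of_norm {R : realDomainType} {x y G : R} :
  `|x| <= G -> `|y| <= G -> x ^+ 2 + y ^+ 2 <= 2 * G ^+ 2.
Proof.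
move=> xG yG; have G0 : 0 <= G := le_trans (normr_ge0 x) xG.
by move: xG yG; rewrite !ler_norm_sqr // => ? ?; lra.
Qed.

Lemma norm_le_of_sqr_add {R : realDomainType} {x y G : R} :
  0 <= G -> x ^+ 2 + y ^+ 2 <= G ^+ 2 -> `|x| <= G /\ `|y| <= G.
Proof.
move=> G0 le_G; rewrite !ler_norm_sqr //.
by have := sqr_ge0 x; have := sqr_ge0 y; split; lra.
Qed.

Lemma ler_norm_combination {R : realDomainType} {w x y z u v p q : R} :
  `|w| <= u -> `|x| <= v -> `|y| <= p -> `|z| <= q -> `|w - x + y + z| <= u + v + p + q.
Proof.
move=> /ler_normlP[? ?] /ler_normlP[? ?] /ler_normlP[? ?] /ler_normlP[? ?].
by apply/ler_normlP; split; lra.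
Qed.

Lemma energy_step_identity {R : comRingType} (x y p q r s h M : R) :
  (x + h * (2 * q - s)) ^+ 2 + (y - h * (2 * p - r)) ^+ 2 - (x ^+ 2 + y ^+ 2)
    - h ^+ 2 * (2 * M - 1) * (x ^+ 2 + y ^+ 2) =
  4 * h * (x * q - y * p - h * M * (x ^+ 2 + y ^+ 2))
  - 2 * h * (x * s - y * r - h * (M + 1) * (x ^+ 2 + y ^+ 2))
  + h ^+ 2 * ((2 * p - r - x) * (2 * p - r + x))
  + h ^+ 2 * ((2 * q - s - y) * (2 * q - s + y)).
Proof. ring. Qed.

Lemma energy_increment_arith {R : realFieldType} {h m N dN c g : R} :
  0 <= h -> h <= 1 -> 1 <= m -> 0 <= N -> N <= 32 * g ^+ 2 -> 2 * c <= N ->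
  3456 * (m + 1) ^+ 2 * h * g ^+ 2 <= c ->
  `|dN - h ^+ 2 * (2 * m - 1) * N| <= 216 * (m + 1) ^+ 2 * h ^+ 3 * (4 * g) ^+ 2 ->
  h ^+ 2 * c <= dN <= 4000 * (m + 1) ^+ 2 * h ^+ 2 * g ^+ 2.
Proof.
move=> h0 h1 m1 N0 N_le Nc hc /ler_normlP[K1 K2].
set M := (m + 1) ^+ 2 in hc K1 K2 *.
have M1 : 1 <= M by rewrite /M; nra.
have h2 : 0 <= h ^+ 2 := sqr_ge0 h.
have growth : 2 * (h ^+ 2 * c) <= h ^+ 2 * (2 * m - 1) * N.
  by rewrite mulrCA -mulrA ler_wpM2l //; nra.
have bound : h ^+ 2 * (2 * m - 1) * N <= 64 * (M * h ^+ 2 * g ^+ 2).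
  rewrite (_ : 64 * _ = h ^+ 2 * (64 * M * g ^+ 2)); last by ring.
  by rewrite -mulrA ler_wpM2l // /M; nra.
have err : 216 * M * h ^+ 3 * (4 * g) ^+ 2 <= h ^+ 2 * c.
  rewrite (_ : 216 * M * h ^+ 3 * (4 * g) ^+ 2 = h ^+ 2 * (3456 * M * h * g ^+ 2));
    last by ring.
  by rewrite ler_wpM2l.
have err1 : 216 * M * h ^+ 3 * (4 * g) ^+ 2 <= 3456 * (M * h ^+ 2 * g ^+ 2).
  rewrite (_ : 216 * M * h ^+ 3 * (4 * g) ^+ 2 = 3456 * (M * h ^+ 2 * g ^+ 2) * h);
    last by ring.
  have M0 : 0 <= M by lra.
  by apply: ler_piMr h1; rewrite mulr_ge0 // mulr_ge0 ?sqr_ge0 // mulr_ge0.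
rewrite (_ : 4000 * M * h ^+ 2 * g ^+ 2 = 4000 * (M * h ^+ 2 * g ^+ 2)); last by ring.
by apply/andP; split; lra.
Qed.

Lemma growth_step_arith {R : realFieldType} {N0 N N' t c D g : R} :
  N0 + t * c <= N -> N <= N0 + t * D -> c <= N' - N <= D ->
  N0 <= 8 * g ^+ 2 -> (t + 1) * D <= 8 * g ^+ 2 ->
  [/\ N0 + (t + 1) * c <= N', N' <= N0 + (t + 1) * D & N' <= (4 * g) ^+ 2].
Proof. by move=> ? ? /andP[? ?] ? ?; split; lra. Qed.

Lemma sqr_sub_le {R : realDomainType} {x y g d : R} :
  `|x| <= 4 * g -> `|y| <= g -> `|x - y| <= d -> x ^+ 2 - y ^+ 2 <= 5 * g * d.
Proof.
move=> xg yg xyd; rewrite (_ : _ - _ = (x - y) * (x + y)); last by ring.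
apply: le_trans (ler_norm _) _; rewrite normrM mulrC.
apply: ler_pM => //; apply: le_trans (ler_normD _ _) _; lra.
Qed.

Lemma delay_le_sqr {R : realDomainType} (m : nat) :
  (2 * m + 3)%:R <= 3 * (m%:R + 1) ^+ 2 :> R.
Proof. by rewrite natrD natrM; have := ler0n R m; nra. Qed.

Lemma step_size_consequences {R : realFieldType} {h M P N1 g : R} :
  0 <= h -> 1 <= M -> P <= 3 * M -> 0 < N1 -> N1 <= 2 * g ^+ 2 ->
  3456 * M * h * g ^+ 2 <= N1 / 4 ->
  [/\ h <= 1, 6 * h * P <= 1 & 36 * h * P * g ^+ 2 <= N1 / 2].
Proof.
move=> h0 M1 PM N1_gt0 N1_le hN1.
have g2 : 0 < g ^+ 2 by lra.
have Mh0 : 0 <= M * h by rewrite mulr_ge0 // (le_trans ler01 M1).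
have Y0 : 0 <= 3456 * M * h * g ^+ 2.
  rewrite (_ : 3456 * M * h * g ^+ 2 = 3456 * (M * h) * g ^+ 2); last by ring.
  exact: mulr_ge0 (mulr_ge0 (ler0n _ _) Mh0) (sqr_ge0 _).
have hM : 6912 * (M * h) <= 1.
  rewrite -(ler_pM2r g2) mul1r.
  rewrite (_ : 6912 * (M * h) * g ^+ 2 = 2 * (3456 * M * h * g ^+ 2)); last by ring.
  lra.
have Mh_le (c : nat) : (c <= 6912)%N -> c%:R * (M * h) <= 1.
  by move=> le_c; apply: le_trans hM; rewrite ler_wpM2r // ler_nat.
have hP : 6 * h * P <= 18 * (M * h).
  by rewrite (_ : 18 * (M * h) = 6 * h * (3 * M)); [rewrite ler_wpM2l ?mulr_ge0 | ring].
split.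
- by apply: le_trans (ler_peMl h0 M1) (le_trans _ (Mh_le 6912%N isT)); rewrite ler_peMl ?ler1n.
- exact: le_trans hP (Mh_le 18%N isT).
rewrite (_ : 36 * h * P * g ^+ 2 = (6 * h * P) * (6 * g ^+ 2)); last by ring.
apply: le_trans (ler_wpM2r _ hP) _; first by rewrite mulr_ge0 ?ltW.
rewrite (_ : 18 * (M * h) * (6 * g ^+ 2) = 3456 * M * h * g ^+ 2 / 32); last by field.
lra.
Qed.

Lemma sums_bound_arith {R : realFieldType} {h L P m g N1 NP aT bT a1 b1 Sa Sb : R} :
  0 < h -> N1 = a1 ^+ 2 + b1 ^+ 2 -> N1 - 36 * h * P * g ^+ 2 <= NP ->
  NP + L * h ^+ 2 * (N1 / 4) <= aT ^+ 2 + bT ^+ 2 ->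
  aT ^+ 2 - a1 ^+ 2 <= 5 * g * (h * (Sb + (m + 1) * (4 * g))) ->
  bT ^+ 2 - b1 ^+ 2 <= 5 * g * (h * (Sa + (m + 1) * (4 * g))) ->
  L * h * N1 <= 20 * g * (Sa + Sb) + (144 * P + 160 * (m + 1)) * g ^+ 2.
Proof.
move=> h_gt0 -> NP_ge NP_le da db; rewrite -(ler_pM2l h_gt0).
by move: NP_ge NP_le da db; clear -h_gt0; lra.
Qed.

Section DelayedRotation.
Context {R : realFieldType} {m : nat} {h : R} {a b : nat -> R}.
Hypotheses (dyn : delayed_rotation m h a b) (h_ge0 : 0 <= h).

Lemma bounded_upto_le {t t' : nat} {G : R} :
  (t' <= t)%N -> bounded_upto a b t G -> bounded_upto a b t' G.
Proof. by move=> le_t B r r_gt0 le_r; apply: B => //; lia. Qed.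

Lemma zext_bounded {t : nat} {G : R} r : 0 <= G -> bounded_upto a b t G -> (r <= t)%N ->
  `|zext a r| <= G /\ `|zext b r| <= G.
Proof. by move=> G0 B; case: r => [|r] le_r /=; [rewrite normr0 | apply: B]. Qed.

Lemma feedback_bounded {t : nat} {G : R} s : 0 <= G -> bounded_upto a b t G -> (s <= t)%N ->
  `|feedback m a s| <= 3 * G /\ `|feedback m b s| <= 3 * G.
Proof.
move=> G0 B le_s; rewrite /feedback.
have [/ler_normlP[? ?] /ler_normlP[? ?]] := zext_bounded (s - m) G0 B ltac:(lia).
have [/ler_normlP[? ?] /ler_normlP[? ?]] := zext_bounded (s - m.+1) G0 B ltac:(lia).
by split; apply/ler_normlP; split; lra.
Qed.

Lemma step_bounded {s : nat} {G : R} : 0 <= G -> bounded_upto a b s G -> (1 <= s)%N ->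
  `|a s.+1 - a s| <= 3 * h * G /\ `|b s.+1 - b s| <= 3 * h * G.
Proof.
move=> G0 B s_ge1; have [-> ->] := dyn _ s_ge1.
have [Fa Fb] := feedback_bounded s G0 B (leqnn s).
rewrite addrAC subrr add0r addrC addKr !normrM ?normrN (ger0_norm h_ge0) -mulrA.
rewrite normrM (ger0_norm h_ge0) mulrCA; split; exact: ler_wpM2l.
Qed.

Lemma lag_bounded {t : nat} {G : R} : 0 <= G -> bounded_upto a b t G ->
  forall j, (j < t)%N ->
  `|a (t - j) - a t| <= 3 * h * j%:R * G /\ `|b (t - j) - b t| <= 3 * h * j%:R * G.
Proof.
move=> G0 B; elim=> [|j IH] lt_jt.
  by rewrite subn0 !subrr normr0 mulr0n mulr0 mul0r.
have [/ler_normlP[? ?] /ler_normlP[? ?]] := IH (ltnW lt_jt).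
have lt_j : (1 <= t - j.+1)%N by lia.
have := step_bounded G0 (bounded_upto_le (leq_subr j.+1 t) B) lt_j.
rewrite (_ : (t - j.+1).+1 = t - j)%N; last by lia.
move=> [/ler_normlP[? ?] /ler_normlP[? ?]].
by rewrite -natr1; split; apply/ler_normlP; split; nra.
Qed.

Lemma feedback_near {t : nat} {G : R} i : 0 <= G -> bounded_upto a b t G ->
  (2 * m + 3 <= t)%N -> (i <= m.+1)%N ->
  `|feedback m a (t - i) - a t| <= 18 * (m%:R + 1) * h * G /\
  `|feedback m b (t - i) - b t| <= 18 * (m%:R + 1) * h * G.
Proof.
move=> G0 B le_t le_i; rewrite /feedback.
rewrite (_ : (t - i - m = t - (i + m))%N); last by lia.
rewrite (_ : (t - i - m.+1 = t - (i + m).+1)%N); last by lia.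
rewrite !zext_pos; try lia.
have [la lb] := lag_bounded G0 B (i + m)%N ltac:(lia).
have [la' lb'] := lag_bounded G0 B (i + m).+1 ltac:(lia).
have le_iR : i%:R <= m%:R + 1 :> R by rewrite natr1 ler_nat.
have hG0 : 0 <= h * G by apply: mulr_ge0.
have : h * G * i%:R <= h * G * (m%:R + 1) by apply: ler_wpM2l.
move: la lb la' lb'; rewrite -!natr1 !natrD.
move=> /ler_normlP[? ?] /ler_normlP[? ?] /ler_normlP[? ?] /ler_normlP[? ?] ?.
by split; apply/ler_normlP; split; nra.
Qed.

Lemma cross_lag_near {t : nat} {G : R} : 0 <= G -> bounded_upto a b t G -> (2 * m + 3 <= t)%N ->
  forall j, (j <= m.+1)%N ->
  `|a t * b (t - j) - b t * a (t - j) - h * j%:R * energy a b t|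
    <= h * j%:R * (2 * G * (18 * (m%:R + 1) * h * G)).
Proof.
move=> G0 B le_t; elim=> [|j IH] le_j.
  by rewrite subn0 mulr0n !mulr0 !mul0r subr0 (mulrC (a t)) subrr normr0.
set E := 18 * (m%:R + 1) * h * G.
have lt_j : (1 <= t - j.+1)%N by lia.
have := IH (ltnW le_j); rewrite -/E (_ : t - j = (t - j.+1).+1)%N; last by lia.
have [-> ->] := dyn _ lt_j.
have [at_le bt_le] : `|a t| <= G /\ `|b t| <= G by apply: B; lia.
have [Fa_near Fb_near] := feedback_near j.+1 G0 B le_t le_j.
set Fa := feedback m a _; set Fb := feedback m b _.
move=> /ler_normlP[? ?].
have ua : `|a t * (Fa - a t)| <= G * E by rewrite normrM; apply: ler_pM.
have ub : `|b t * (Fb - b t)| <= G * E by rewrite normrM; apply: ler_pM.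
have /ler_normlP[? ?] : `|h * (a t * (Fa - a t) + b t * (Fb - b t))| <= h * (2 * G * E).
  rewrite normrM (ger0_norm h_ge0); apply: ler_wpM2l => //.
  by apply: le_trans (ler_normD _ _) _; lra.
rewrite -natr1 (_ : a t * b _ - _ - _ = a t * (b (t - j.+1) - h * Fa)
    - b t * (a (t - j.+1) + h * Fb) - h * j%:R * energy a b t
    + h * (a t * (Fa - a t) + b t * (Fb - b t))); last by rewrite /energy; ring.
rewrite (_ : h * (j%:R + 1) * _ = h * j%:R * (2 * G * E) + h * (2 * G * E)); last by rewrite /E; ring.
apply/ler_normlP; split; lra.
Qed.

Lemma energy_step {t : nat} {G : R} : 0 <= G -> bounded_upto a b t G -> (2 * m + 3 <= t)%N ->
  `|energy a b t.+1 - energy a b t - h ^+ 2 * (2 * m%:R - 1) * energy a b t|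
    <= 216 * (m%:R + 1) ^+ 2 * h ^+ 3 * G ^+ 2.
Proof.
move=> G0 B le_t.
have t_ge1 : (1 <= t)%N by lia.
have tm_gt0 : (0 < t - m)%N by lia.
have tm1_gt0 : (0 < t - m.+1)%N by lia.
have [at_le bt_le] : `|a t| <= G /\ `|b t| <= G by apply: B.
have [Fa_near Fb_near] := feedback_near 0 G0 B le_t (leq0n _).
have [Fa_le Fb_le] := feedback_bounded t G0 B (leqnn t).
have Cm := cross_lag_near G0 B le_t m (leqnSn m).
have Cm1 := cross_lag_near G0 B le_t m.+1 (leqnn m.+1).
rewrite subn0 in Fa_near Fb_near.
rewrite /energy; have [-> ->] := dyn t t_ge1.
move: Fa_near Fb_near Fa_le Fb_le; rewrite /feedback !zext_pos //.
move=> Fa_near Fb_near Fa_le Fb_le.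
rewrite /energy -[m.+1%:R]natr1 in Cm Cm1.
rewrite energy_step_identity.
have scale (c x u : R) : 0 <= c -> `|x| <= u -> `|c * x| <= c * u.
  by move=> c0 xu; rewrite normrM ger0_norm // ler_wpM2l.
have sum_le (x y : R) : `|x| <= 3 * G -> `|y| <= G -> `|x + y| <= 4 * G.
  move=> xG yG; apply: le_trans (ler_normD _ _) _.
  by rewrite (_ : 4 * G = 3 * G + G); [exact: lerD | ring].
have prod (x y u v : R) : `|x| <= u -> `|y| <= v -> `|x * y| <= u * v.
  by move=> xu yv; rewrite normrM; apply: ler_pM.
have h2_ge0 : 0 <= h ^+ 2 by apply: exprn_ge0.
have h4 : 0 <= 4 * h by rewrite mulr_ge0.
have h2 : 0 <= 2 * h by rewrite mulr_ge0.
apply: le_trans (ler_norm_combination (scale _ _ _ h4 Cm) (scale _ _ _ h2 Cm1)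
  (scale _ _ _ h2_ge0 (prod _ _ _ _ Fa_near (sum_le _ _ Fa_le at_le)))
  (scale _ _ _ h2_ge0 (prod _ _ _ _ Fb_near (sum_le _ _ Fb_le bt_le)))) _.
by rewrite le_eqVlt; apply/orP; left; apply/eqP; ring.
Qed.

Lemma early_phase (P : nat) (g : R) : (0 < P)%N -> 0 <= g -> `|a 1%N| <= g -> `|b 1%N| <= g ->
  6 * h * P%:R <= 1 ->
  bounded_upto a b P (2 * g) /\ energy a b 1 - 36 * h * P%:R * g ^+ 2 <= energy a b P.
Proof.
move=> P_gt0 g0 a1_le b1_le hP.
have small i : (i < P)%N -> 6 * h * i%:R <= 1.
  move=> lt_iP; apply: le_trans hP; rewrite -!mulrA ler_wpM2l // ler_wpM2l //.
  by rewrite ler_nat ltnW.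
have drift i : (i < P)%N -> bounded_upto a b i.+1 (2 * g) /\
    `|a i.+1 - a 1%N| <= 6 * h * i%:R * g /\ `|b i.+1 - b 1%N| <= 6 * h * i%:R * g.
  elim: i => [|i IH] lt_iP.
    rewrite !subrr normr0 mulr0n mulr0 mul0r; split=> // r r_gt0 le_r1.
    by rewrite (_ : r = 1%N); [split; lra | lia].
  have [B [/ler_normlP[? ?] /ler_normlP[? ?]]] := IH (ltnW lt_iP).
  have [/ler_normlP[? ?] /ler_normlP[? ?]] :=
    step_bounded (ltac:(lra) : 0 <= 2 * g) B (ltn0Sn i).
  have := small _ lt_iP; rewrite -natr1 => small_i.
  have hg : 6 * h * (i%:R + 1) * g <= g by nra.
  move/ler_normlP: a1_le => [? ?]; move/ler_normlP: b1_le => [? ?].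
  split; last by split; apply/ler_normlP; split; nra.
  move=> r r_gt0; rewrite leq_eqVlt => /orP[/eqP -> | ]; last by apply: B.
  by split; apply/ler_normlP; split; nra.
have [B [aP bP]] := drift P.-1 ltac:(lia).
rewrite prednK // in B aP bP.
have e_le : 6 * h * P.-1%:R * g <= g by have := small _ (ltac:(lia) : (P.-1 < P)%N); nra.
have sq_lower (x y : R) : `|x - y| <= 6 * h * P.-1%:R * g -> `|y| <= g ->
    y ^+ 2 - 18 * (h * g ^+ 2 * P.-1%:R) <= x ^+ 2.
  move=> /ler_normlP[? ?] /ler_normlP[? ?].
  rewrite (_ : 18 * _ = 3 * (6 * h * P.-1%:R * g) * g); [nra | ring].
have := sq_lower _ _ aP a1_le; have := sq_lower _ _ bP b1_le.
have : h * g ^+ 2 * P.-1%:R <= h * g ^+ 2 * P%:R.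
  by rewrite ler_wpM2l ?mulr_ge0 ?sqr_ge0 // ler_nat leq_pred.
rewrite /energy (_ : 36 * h * P%:R * g ^+ 2 = 36 * (h * g ^+ 2 * P%:R)); [by split => //; lra | ring].
Qed.

Lemma energy_le_of_bounded {t : nat} {G : R} r : bounded_upto a b t G ->
  (0 < r)%N -> (r <= t)%N -> energy a b r <= 2 * G ^+ 2.
Proof. by move=> B r_gt0 le_r; have [] := B r r_gt0 le_r; apply: sqr_add_le_of_norm. Qed.

Lemma energy_increment {u : nat} {g c : R} : (1 <= m)%N -> h <= 1 -> 0 <= g ->
  bounded_upto a b u (4 * g) -> (2 * m + 3 <= u)%N -> 2 * c <= energy a b u ->
  3456 * (m%:R + 1) ^+ 2 * h * g ^+ 2 <= c ->
  h ^+ 2 * c <= energy a b u.+1 - energy a b u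
    <= 4000 * (m%:R + 1) ^+ 2 * h ^+ 2 * g ^+ 2.
Proof.
move=> m_ge1 h_le1 g0 B le_u.
have u_gt0 : (0 < u)%N by lia.
move=> Nc hc.
have N0 : 0 <= energy a b u by rewrite addr_ge0 ?sqr_ge0.
have N_le : energy a b u <= 32 * g ^+ 2.
  by rewrite (_ : 32 * g ^+ 2 = 2 * (4 * g) ^+ 2); [exact: energy_le_of_bounded B _ _ | ring].
have K := energy_step (mulr_ge0 (ler0n _ 4) g0) B le_u.
have m1 : 1 <= m%:R :> R by rewrite ler1n.
exact: energy_increment_arith h_ge0 h_le1 m1 N0 N_le Nc hc K.
Qed.

Lemma growth_phase {g c : R} (L : nat) : (1 <= m)%N -> h <= 1 -> 0 <= g ->
  bounded_upto a b (2 * m + 3) (2 * g) -> 2 * c <= energy a b (2 * m + 3) ->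
  3456 * (m%:R + 1) ^+ 2 * h * g ^+ 2 <= c ->
  L%:R * (4000 * (m%:R + 1) ^+ 2 * h ^+ 2 * g ^+ 2) <= 8 * g ^+ 2 ->
  forall t, (t <= L)%N ->
  [/\ bounded_upto a b (2 * m + 3 + t) (4 * g),
      energy a b (2 * m + 3) + t%:R * (h ^+ 2 * c) <= energy a b (2 * m + 3 + t) &
      energy a b (2 * m + 3 + t)
        <= energy a b (2 * m + 3) + t%:R * (4000 * (m%:R + 1) ^+ 2 * h ^+ 2 * g ^+ 2)].
Proof.
move=> m_ge1 h_le1 g0 BP Nc hc hL.
have P_gt0 : (0 < 2 * m + 3)%N by rewrite addn_gt0 orbT.
have NP_le : energy a b (2 * m + 3) <= 8 * g ^+ 2.
  by rewrite (_ : 8 * g ^+ 2 = 2 * (2 * g) ^+ 2); [exact: energy_le_of_bounded BP _ _ | ring].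
have c0 : 0 <= c.
  apply: le_trans hc.
  exact: mulr_ge0 (mulr_ge0 (mulr_ge0 (ler0n _ _) (sqr_ge0 _)) h_ge0) (sqr_ge0 _).
have h2c0 : 0 <= h ^+ 2 * c := mulr_ge0 (sqr_ge0 _) c0.
have D0 : 0 <= 4000 * (m%:R + 1) ^+ 2 * h ^+ 2 * g ^+ 2.
  exact: mulr_ge0 (mulr_ge0 (mulr_ge0 (ler0n _ _) (sqr_ge0 _)) (sqr_ge0 _)) (sqr_ge0 _).
elim=> [|t IH] le_tL.
  rewrite addn0 mulr0n !mul0r !addr0; split => // r r_gt0 le_r.
  have two_four : 2 * g <= 4 * g by rewrite ler_wpM2r // ler_nat.
  by have [? ?] := BP r r_gt0 le_r; split; apply: le_trans two_four.
have [B lo up] := IH (ltnW le_tL).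
have Nc_t : 2 * c <= energy a b (2 * m + 3 + t).
  by apply: le_trans Nc (le_trans _ lo); rewrite lerDl mulr_ge0.
have inc := energy_increment m_ge1 h_le1 g0 B (leq_addr t _) Nc_t hc.
have tD : (t%:R + 1) * (4000 * (m%:R + 1) ^+ 2 * h ^+ 2 * g ^+ 2) <= 8 * g ^+ 2.
  by apply: le_trans hL; rewrite ler_wpM2r // natr1 ler_nat.
have [lo' up' small] := growth_step_arith lo up inc NP_le tD.
rewrite addnS -[t.+1%:R]natr1; split => //.
move=> r r_gt0; rewrite leq_eqVlt => /orP[/eqP -> | ]; last exact: B.
by apply: norm_le_of_sqr_add; rewrite ?mulr_ge0.
Qed.

Lemma drift_eq_sum T :
  a T.+1 - a 1%N = h * \sum_(1 <= t < T.+1) feedback m b t /\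
  b T.+1 - b 1%N = - (h * \sum_(1 <= t < T.+1) feedback m a t).
Proof.
rewrite -(telescope_sumr a (ltn0Sn T)) -(telescope_sumr b (ltn0Sn T)).
rewrite !mulr_sumr -sumrN.
by split; apply: eq_big_nat => t /andP[t_ge1 _]; have [ea eb] := dyn t t_ge1;
  rewrite ?ea ?eb; ring.
Qed.

Lemma sum_feedback_near {T : nat} {G : R} : 0 <= G -> bounded_upto a b T G ->
  `|\sum_(1 <= t < T.+1) feedback m a t - \sum_(1 <= t < T.+1) a t| <= (m%:R + 1) * G /\
  `|\sum_(1 <= t < T.+1) feedback m b t - \sum_(1 <= t < T.+1) b t| <= (m%:R + 1) * G.
Proof.
move=> G0 B.
have tail (c : nat -> R) : (forall r, (r <= T)%N -> `|zext c r| <= G) ->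
    `|\sum_(1 <= t < T.+1) feedback m c t - \sum_(1 <= t < T.+1) c t| <= (m%:R + 1) * G.
  have cancel (x y z : R) : x - y + z - x = - y + z by ring.
  move=> cG; rewrite sum_feedback cancel mulrDl mul1r.
  apply: le_trans (ler_normD _ _) (lerD _ (cG _ (leq_subr _ _))).
  rewrite normrN; apply: le_trans (ler_norm_sum _ _ _) _.
  rewrite (_ : m%:R * G = \sum_(i < m) G); last by rewrite sumr_const card_ord mulr_natl.
  by apply: ler_sum => i _; apply: cG; rewrite leq_subr.
by split; apply: tail => r le_r; have [] := zext_bounded r G0 B le_r.
Qed.

Lemma drift_le_sum {T : nat} {G : R} : 0 <= G -> bounded_upto a b T G ->
  `|a T.+1 - a 1%N| <= h * (`|\sum_(1 <= t < T.+1) b t| + (m%:R + 1) * G) /\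
  `|b T.+1 - b 1%N| <= h * (`|\sum_(1 <= t < T.+1) a t| + (m%:R + 1) * G).
Proof.
move=> G0 B; have [ea eb] := drift_eq_sum T; have [na nb] := sum_feedback_near G0 B.
rewrite ea eb normrN !normrM ger0_norm //.
have near (x y : R) : `|x - y| <= (m%:R + 1) * G -> `|x| <= `|y| + (m%:R + 1) * G.
  by move=> xy; rewrite -(subrK y x) addrC; apply: le_trans (ler_normD _ _) _; rewrite lerD2l.
by split; apply: ler_wpM2l => //; apply: near.
Qed.

Lemma sums_lower_bound {T : nat} {g : R} : (1 <= m)%N -> 0 < h -> 0 <= g ->
  `|a 1%N| <= g -> `|b 1%N| <= g -> 0 < energy a b 1 ->
  3456 * (m%:R + 1) ^+ 2 * h * g ^+ 2 <= energy a b 1 / 4 ->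
  T%:R * (4000 * (m%:R + 1) ^+ 2 * h ^+ 2 * g ^+ 2) <= 8 * g ^+ 2 ->
  (2 * m + 3 <= T.+1)%N ->
  (T.+1 - (2 * m + 3))%:R * h * energy a b 1
    <= 20 * g * (`|\sum_(1 <= t < T.+1) a t| + `|\sum_(1 <= t < T.+1) b t|)
       + (144 * (2 * m + 3)%:R + 160 * (m%:R + 1)) * g ^+ 2.
Proof.
move=> m_ge1 h_gt0 g0 a1_le b1_le N1_gt0 hN1 hT le_PT.
have P_gt0 : (0 < 2 * m + 3)%N by rewrite addn_gt0 orbT.
have le_LT : (T.+1 - (2 * m + 3) <= T)%N by move: le_PT; clear; lia.
have eT : (2 * m + 3 + (T.+1 - (2 * m + 3)) = T.+1)%N by move: le_PT; clear; lia.
have M1 : 1 <= (m%:R + 1) ^+ 2 :> R by rewrite natr1 exprn_ege1 // ler1n.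
have B1 : bounded_upto a b 1 g.
  move=> r r_gt0 le_r1.
  by have -> : r = 1%N by apply/eqP; rewrite eqn_leq le_r1 r_gt0.
have N1_le := energy_le_of_bounded 1 B1 (ltn0Sn 0) (leqnn 1).
have [h_le1 hP hPg] := step_size_consequences (ltW h_gt0) M1 (delay_le_sqr m) N1_gt0 N1_le hN1.
have [BP NP] := early_phase (2 * m + 3) g P_gt0 g0 a1_le b1_le hP.
have Nc : 2 * (energy a b 1 / 4) <= energy a b (2 * m + 3).
  by move: NP hPg; clear -h_ge0; lra.
have D0 : 0 <= 4000 * (m%:R + 1) ^+ 2 * h ^+ 2 * g ^+ 2.
  exact: mulr_ge0 (mulr_ge0 (mulr_ge0 (ler0n _ _) (sqr_ge0 _)) (sqr_ge0 _)) (sqr_ge0 _).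
have LT : (T.+1 - (2 * m + 3))%:R <= T%:R :> R by rewrite ler_nat.
have [B lo _] := growth_phase _ m_ge1 h_le1 g0 BP Nc hN1 (le_trans (ler_wpM2r D0 LT) hT)
  _ (leqnn _).
rewrite eT in B lo.
have g4 : 0 <= 4 * g by rewrite mulr_ge0.
have [da db] := drift_le_sum g4 (bounded_upto_le (leqnSn T) B).
have [aT bT] := B T.+1 (ltn0Sn T) (leqnn _).
apply: (sums_bound_arith h_gt0 erefl NP _ (sqr_sub_le aT a1_le da) (sqr_sub_le bT b1_le db)).
by rewrite -mulrA.
Qed.

End DelayedRotation.

Lemma step_conditions {R : realFieldType} {k s h M g N1 T : R} :
  0 < k -> 1 <= s -> h * s = 2 * k -> s ^+ 2 = T -> 1 <= M -> 0 < g -> N1 <= g ^+ 2 ->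
  8 * 3456 * M * g ^+ 2 * k <= N1 ->
  3456 * M * h * g ^+ 2 <= N1 / 4 /\ T * (4000 * M * h ^+ 2 * g ^+ 2) <= 8 * g ^+ 2.
Proof.
move=> k_gt0 s1 hs sT M1 g_gt0 N1_le kN1.
have s_gt0 : 0 < s by lra.
have h_le : h <= 2 * k.
  by rewrite -(ler_pM2r s_gt0) hs ler_peMr ?mulr_ge0 //; lra.
have M0 : 0 <= M by lra.
have Mk0 : 0 <= M * k := mulr_ge0 M0 (ltW k_gt0).
split.
  apply: le_trans (_ : 3456 * M * (2 * k) * g ^+ 2 <= _).
    by rewrite ler_wpM2r ?sqr_ge0 // ler_wpM2l // mulr_ge0.
  rewrite (_ : 3456 * M * (2 * k) * g ^+ 2 = 8 * 3456 * M * g ^+ 2 * k / 4); last by field.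
  lra.
have g2 : 0 < g ^+ 2 := exprn_gt0 2 g_gt0.
have Mk : 8 * 3456 * (M * k) <= 1.
  rewrite -(ler_pM2r g2) mul1r; apply: le_trans (le_trans kN1 N1_le).
  by rewrite le_eqVlt; apply/orP; left; apply/eqP; ring.
have k_le1 : k <= 1.
  apply: le_trans (ler_peMl (ltW k_gt0) M1) (le_trans _ Mk).
  by rewrite ler_peMl //; lra.
have Mkk : M * k * k <= M * k by rewrite ler_piMr.
rewrite -sT (_ : s ^+ 2 * _ = 4000 * M * (h * s) ^+ 2 * g ^+ 2); last by ring.
rewrite hs (_ : 4000 * M * (2 * k) ^+ 2 * g ^+ 2 = 2000 * (M * k * k) * (8 * g ^+ 2));
  last by ring.
apply: ler_piMl; first by rewrite mulr_ge0 ?sqr_ge0.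
have c : 2000 <= 8 * 3456 :> R by rewrite -natrM ler_nat.
exact: le_trans (ler_wpM2l (ler0n _ _) Mkk) (le_trans (ler_wpM2r Mk0 c) Mk).
Qed.

Lemma sqrt_rate_arith {R : realFieldType} {k s h L N1 g S K : R} :
  0 < k -> 0 < N1 -> 0 < g -> 0 < s -> h * s = 2 * k -> s ^+ 2 <= 2 * L ->
  2 * (K * g ^+ 2) <= s * (k * N1) -> L * h * N1 <= 20 * g * S + K * g ^+ 2 ->
  k * N1 / (40 * g) * s <= S.
Proof.
move=> k_gt0 N1_gt0 g_gt0 s_gt0 hs sL K_le main.
have h0 : 0 <= h by rewrite -(pmulr_rge0 _ s_gt0) mulrC hs; lra.
have lower : s * (k * N1) <= L * h * N1.
  have -> : k = h * s / 2 by rewrite hs; field.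
  rewrite (_ : s * (h * s / 2 * N1) = s ^+ 2 / 2 * (h * N1)); last by field.
  rewrite -[L * h * N1]mulrA; apply: ler_wpM2r; first exact: mulr_ge0 h0 (ltW N1_gt0).
  lra.
rewrite mulrAC ler_pdivrMr; last by lra.
rewrite (_ : S * (40 * g) = 2 * (20 * g * S)); last by ring.
lra.
Qed.

Lemma le_sqrt_archi_bound {R : realType} {X : R} {T : nat} :
  0 <= X -> (Num.Def.archi_bound (X ^+ 2) <= T)%N -> X <= Num.sqrt T%:R.
Proof.
move=> X0 le_T; rewrite -[X]ger0_norm // -sqrtr_sqr ler_sqrt ?ler0n //.
by apply: le_trans (ltW (archi_boundP (sqr_ge0 X))) _; rewrite ler_nat.
Qed.

Lemma sqr_le_sqr_add_norm {R : realDomainType} (x y : R) :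
  x ^+ 2 + y ^+ 2 <= (`|x| + `|y|) ^+ 2.
Proof.
rewrite -(real_normK (num_real x)) -(real_normK (num_real y)).
by have := normr_ge0 x; have := normr_ge0 y; nra.
Qed.

Lemma sums_ge_sqrt {R : realType} {m : nat} {k : R} {T : nat} {a b : nat -> R} :
  (1 <= m)%N -> 0 < k -> 0 < energy a b 1 ->
  8 * 3456 * (m%:R + 1) ^+ 2 * (`|a 1%N| + `|b 1%N|) ^+ 2 * k <= energy a b 1 ->
  (2 * (2 * m + 3) <= T)%N ->
  2 * ((144 * (2 * m + 3)%:R + 160 * (m%:R + 1)) * (`|a 1%N| + `|b 1%N|) ^+ 2)
    <= Num.sqrt T%:R * (k * energy a b 1) ->
  delayed_rotation m (2 * (k / Num.sqrt T%:R)) a b ->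
  k * energy a b 1 / (40 * (`|a 1%N| + `|b 1%N|)) * Num.sqrt T%:R
    <= `|\sum_(1 <= t < T.+1) a t| + `|\sum_(1 <= t < T.+1) b t|.
Proof.
move=> m_ge1 k_gt0 N1_gt0 kN1 le_PT K_le dyn.
have le_PT1 : (2 * m + 3 <= T.+1)%N by move: le_PT; clear; lia.
have le_TL : (T <= 2 * (T.+1 - (2 * m + 3)))%N by move: le_PT; clear; lia.
have T_ge1 : (1 <= T)%N by move: le_PT; clear; lia.
have N1_le : energy a b 1 <= (`|a 1%N| + `|b 1%N|) ^+ 2 := sqr_le_sqr_add_norm _ _.
set N1 := energy a b 1 in N1_gt0 kN1 K_le N1_le *; set g := `|a 1%N| + `|b 1%N| in kN1 K_le N1_le *.
have g_gt0 : 0 < g by rewrite lt0r addr_ge0 ?andbT //; apply: contraTneq N1_le => ->; lra.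
have M1 : 1 <= (m%:R + 1) ^+ 2 :> R by rewrite natr1 exprn_ege1 // ler1n.
set s := Num.sqrt T%:R in K_le dyn *; set h := 2 * (k / s) in dyn.
have s1 : 1 <= s by rewrite -sqrtr1 ler_sqrt ?ler0n // ler1n.
have s_gt0 : 0 < s by lra.
have sT : s ^+ 2 = T%:R by rewrite sqr_sqrtr ?ler0n.
have hs : h * s = 2 * k by rewrite /h -mulrA divfK // gt_eqF.
have h_gt0 : 0 < h by rewrite mulr_gt0 ?divr_gt0.
have [hN1 hT] := step_conditions k_gt0 s1 hs sT M1 g_gt0 N1_le kN1.
have a1_le : `|a 1%N| <= g by rewrite lerDl.
have b1_le : `|b 1%N| <= g by rewrite lerDr.
have main := sums_lower_bound dyn (ltW h_gt0) m_ge1 h_gt0 (ltW g_gt0) a1_le b1_le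
  N1_gt0 hN1 hT le_PT1.
apply: sqrt_rate_arith k_gt0 N1_gt0 g_gt0 s_gt0 hs _ K_le main.
by rewrite sT -natrM ler_nat.
Qed.

Lemma sums_grow_like_sqrt {R : realType} {m : nat} {a1 b1 : R} :
  (1 <= m)%N -> 0 < a1 ^+ 2 + b1 ^+ 2 ->
  exists k0 : R, 0 < k0 /\ forall k : R, 0 < k -> k <= k0 ->
  exists C : R, 0 < C /\ exists T0 : nat, forall T : nat, (T0 <= T)%N ->
  forall a b : nat -> R, delayed_rotation m (2 * (k / Num.sqrt T%:R)) a b ->
    a 1%N = a1 -> b 1%N = b1 ->
    C * Num.sqrt T%:R <= `|\sum_(1 <= t < T.+1) a t| + `|\sum_(1 <= t < T.+1) b t|.
Proof.
set N1 := a1 ^+ 2 + b1 ^+ 2; set g := `|a1| + `|b1|.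
set M : R := (m%:R + 1) ^+ 2; set K : R := 144 * (2 * m + 3)%:R + 160 * (m%:R + 1).
move=> m_ge1 N1_gt0.
have N1_le : N1 <= g ^+ 2 := sqr_le_sqr_add_norm a1 b1.
have g_gt0 : 0 < g by rewrite lt0r addr_ge0 ?andbT //; apply: contraTneq N1_le => ->; lra.
have den_gt0 : 0 < 8 * 3456 * M * g ^+ 2.
  have M_gt0 : 0 < M by rewrite /M natr1 exprn_gt0 // ltr0n.
  have c_gt0 : 0 < 8 * 3456 :> R by rewrite -natrM ltr0n.
  exact: mulr_gt0 (mulr_gt0 c_gt0 M_gt0) (exprn_gt0 2 g_gt0).
exists (N1 / (8 * 3456 * M * g ^+ 2)); split=> [|k k_gt0 k_le]; first exact: divr_gt0.
have kN1 : 8 * 3456 * M * g ^+ 2 * k <= N1 by rewrite mulrC -ler_pdivlMr.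
exists (k * N1 / (40 * g)); split; first by rewrite divr_gt0 ?mulr_gt0 //; lra.
have K0 : 0 <= K by rewrite addr_ge0 ?mulr_ge0 // ?addr_ge0 ?ler0n.
have kN1_gt0 : 0 < k * N1 := mulr_gt0 k_gt0 N1_gt0.
set X := 2 * (K * g ^+ 2) / (k * N1).
have X0 : 0 <= X := divr_ge0 (mulr_ge0 (ler0n _ 2) (mulr_ge0 K0 (sqr_ge0 g))) (ltW kN1_gt0).
exists (maxn (2 * (2 * m + 3)) (Num.Def.archi_bound (X ^+ 2))).
move=> T; rewrite geq_max => /andP[le_PT le_XT] a b dyn a1E b1E.
have K_le : 2 * (K * g ^+ 2) <= Num.sqrt T%:R * (k * N1).
  by have := le_sqrt_archi_bound X0 le_XT; rewrite /X ler_pdivrMr.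
have := @sums_ge_sqrt R m k T a b m_ge1 k_gt0.
by rewrite /energy a1E b1E; apply.
Qed.


Section MatchingPennies.
Context {R : realType}.
Implicit Types (u v w y z : 'cV[R]_2) (x : nat -> 'cV[R]_2).

Lemma ord0_I2 : ord0 = 0 :> 'I_2. Proof. exact: val_inj. Qed.
Lemma lift0_I2 : lift ord0 ord0 = 1 :> 'I_2. Proof. exact: val_inj. Qed.

Lemma dot_expand u v : dot u v = u 0 0 * v 0 0 + u 1 0 * v 1 0.
Proof. by rewrite /dot !big_ord_recl big_ord0 addr0 ord0_I2 lift0_I2. Qed.

Lemma l1_expand u : l1 u = `|u 0 0| + `|u 1 0|.
Proof. by rewrite /l1 !big_ord_recl big_ord0 addr0 ord0_I2 lift0_I2. Qed.

Lemma mp_c0 : (mp_c : 'cV[R]_2) 0 0 = 1. Proof. by rewrite mxE. Qed.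
Lemma mp_c1 : (mp_c : 'cV[R]_2) 1 0 = -1. Proof. by rewrite mxE. Qed.

Lemma dotC u v : dot u v = dot v u.
Proof. by rewrite !dot_expand; ring. Qed.

Lemma dotDl u v w : dot (u + v) w = dot u w + dot v w.
Proof. by rewrite !dot_expand !mxE; ring. Qed.

Lemma dotBl u v w : dot (u - v) w = dot u w - dot v w.
Proof. by rewrite !dot_expand !mxE; ring. Qed.

Lemma dotZl (c : R) u w : dot (c *: u) w = c * dot u w.
Proof. by rewrite !dot_expand !mxE; ring. Qed.

Lemma dotNr u w : dot u (- w) = - dot u w.
Proof. by rewrite !dot_expand !mxE; ring. Qed.

Lemma dot0l w : dot 0 w = 0.
Proof. by rewrite !dot_expand !mxE; ring. Qed.

Lemma dot_mp_cc : dot (mp_c : 'cV[R]_2) mp_c = 2.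
Proof. by rewrite dot_expand mp_c0 mp_c1; ring. Qed.

Lemma mp_A_mul_entry v i : (mp_A *m v) i 0 = mp_c i 0 * dot v mp_c.
Proof.
rewrite /mp_A -mulmxA mxE big_ord_recl big_ord0 addr0.
have -> : (ord0 : 'I_1) = 0 by apply: val_inj.
by congr (_ * _); rewrite mxE dotC /dot; apply: eq_bigr => j _; rewrite !mxE.
Qed.

Lemma dot_mp_A v w : dot v (mp_A *m w) = dot v mp_c * dot w mp_c.
Proof. by rewrite dot_expand !mp_A_mul_entry !dot_expand mp_c0 mp_c1; ring. Qed.

Lemma dot_mp_AT v w : dot v (mp_A^T *m w) = dot v mp_c * dot w mp_c.
Proof. by rewrite /mp_A trmx_mul trmxK -/mp_A dot_mp_A. Qed.

Lemma dot_mp_c_le_l1 y : `|dot y mp_c| <= l1 y.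
Proof.
rewrite dot_expand l1_expand mp_c0 mp_c1 mulr1 mulrN1.
by apply: le_trans (ler_normD _ _) _; rewrite normrN.
Qed.

Lemma util1_dot (x2 : nat -> 'cV[R]_2) s : dot (util1 x2 s) mp_c = 2 * zext (fun t => dot (x2 t) mp_c) s.
Proof. by case: s => [|s] /=; rewrite ?dot0l ?mulr0 // dotC dot_mp_A dot_mp_cc. Qed.

Lemma util2_dot (x1 : nat -> 'cV[R]_2) s :
  dot (util2 x1 s) mp_c = - (2 * zext (fun t => dot (x1 t) mp_c) s).
Proof.
by case: s => [|s] /=; rewrite ?dot0l ?mulr0 ?oppr0 // dotC dotNr dot_mp_AT dot_mp_cc.
Qed.

Lemma oftrl_delayed_rotation {m : nat} {eta : R} {y1 y2} {x1 x2 : nat -> 'cV[R]_2} :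
  oftrl_traj m 1 eta y1 y2 x1 x2 ->
  delayed_rotation m (2 * eta) (fun t => dot (x1 t) mp_c) (fun t => dot (x2 t) mp_c).
Proof.
move=> [_ _ step] t t_ge1; have [-> ->] := step t t_ge1.
rewrite /feedback !dotDl !dotZl !dotBl !util1_dot !util2_dot.
by split; ring.
Qed.

Lemma radius_ge0 T x : 0 <= radius T x.
Proof.
rewrite /radius mulr_ge0 ?invr_ge0 ?ler0n //.
by apply: sumr_ge0 => t _; rewrite l1_expand addr_ge0.
Qed.

Lemma regret_value T (x1 x2 : nat -> 'cV[R]_2) y1 y2 :
  \sum_(1 <= t < T.+1) (dot (y1 - x1 t) (util1 x2 t) + dot (y2 - x2 t) (util2 x1 t)) =
  dot y1 mp_c * \sum_(1 <= t < T.+1) dot (x2 t) mp_c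
    - dot y2 mp_c * \sum_(1 <= t < T.+1) dot (x1 t) mp_c.
Proof.
rewrite !mulr_sumr -sumrB; apply: eq_big_nat => t /andP[t_ge1 _].
case: t t_ge1 => [//|t] _ /=.
by rewrite dot_mp_A dotNr dot_mp_AT !dotBl; ring.
Qed.

Definition column0 (r : R) : 'cV[R]_2 := \col_(i < 2) (if i == 0 :> nat then r else 0).

Lemma column0_dot r : dot (column0 r) mp_c = r.
Proof. by rewrite dot_expand mp_c0 mp_c1 !mxE /=; ring. Qed.

Lemma column0_l1 r : l1 (column0 r) = `|r|.
Proof. by rewrite l1_expand !mxE /= normr0 addr0. Qed.

Lemma regret_ge_sums T (x1 x2 : nat -> 'cV[R]_2) :
  Dsize T x1 x2 * (`|\sum_(1 <= t < T.+1) dot (x1 t) mp_c|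
                   + `|\sum_(1 <= t < T.+1) dot (x2 t) mp_c|) <= RegTot T x1 x2.
Proof.
set Sa := \sum_(1 <= t < T.+1) dot (x1 t) mp_c.
set Sb := \sum_(1 <= t < T.+1) dot (x2 t) mp_c.
set r1 := radius T x1; set r2 := radius T x2.
have r10 : 0 <= r1 := radius_ge0 T x1.
have r20 : 0 <= r2 := radius_ge0 T x2.
have sign_choice (r S : R) : 0 <= r ->
    exists y, l1 y <= r /\ dot y mp_c * S = r * `|S|.
  move=> r0; exists (column0 (if 0 <= S then r else - r)).
  rewrite column0_l1 column0_dot; case: (lerP 0 S) => S0.
    by rewrite !ger0_norm.
  by rewrite normrN ger0_norm // ltr0_norm //; split; [|ring].
have [y1 [y1_le y1S]] := sign_choice r1 Sb r10.
have [y2 [y2_le y2S]] := sign_choice r2 (- Sa) r20.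
have in_set : [set r : R | exists y1 y2 : 'cV[R]_2,
    [/\ l1 y1 <= r1, l1 y2 <= r2 &
        r = \sum_(1 <= t < T.+1)
              (dot (y1 - x1 t) (util1 x2 t) + dot (y2 - x2 t) (util2 x1 t))]]%classic
    (r1 * `|Sb| + r2 * `|Sa|).
  exists y1, y2; split => //; rewrite regret_value -/Sa -/Sb -y1S.
  by rewrite -normrN -y2S; ring.
apply: le_trans (ub_le_sup _ in_set).
  rewrite /Dsize -/r1 -/r2 mulrDr addrC.
  by apply: lerD; apply: ler_wpM2r; rewrite ?ge_min ?lexx ?orbT.
exists (r1 * `|Sb| + r2 * `|Sa|) => _ [z1 [z2 [z1_le z2_le ->]]].
rewrite regret_value -/Sa -/Sb.
have bound (z : 'cV[R]_2) (r S : R) : l1 z <= r -> dot z mp_c * S <= r * `|S|.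
  move=> zr; apply: le_trans (ler_norm _) _; rewrite normrM ler_wpM2r //.
  exact: le_trans (dot_mp_c_le_l1 z) zr.
have := bound _ _ Sb z1_le; have := bound _ _ (- Sa) z2_le.
by rewrite normrN mulrN; lra.
Qed.

End MatchingPennies.

Theorem theorem1 (R : realType) (m : nat) (y1 y2 : 'cV[R]_2) :
  (1 <= m)%N ->
  (dot y1 mp_c, dot y2 mp_c) != (0, 0) ->
  exists k0 : R, 0 < k0 /\
  forall k : R, 0 < k -> k <= k0 ->
  exists C : R, 0 < C /\
  exists T0 : nat, forall T : nat, (T0 <= T)%N ->
  forall x1 x2 : nat -> 'cV[R]_2,
    oftrl_traj m 1 (k / Num.sqrt (T%:R)) y1 y2 x1 x2 ->
    C * Dsize T x1 x2 * Num.sqrt (T%:R) <= RegTot T x1 x2.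
Proof.
move=> m_ge1 y_neq0.
have N0 : 0 < dot y1 mp_c ^+ 2 + dot y2 mp_c ^+ 2.
  rewrite lt0r addr_ge0 ?sqr_ge0 // andbT paddr_eq0 ?sqr_ge0 // !sqrf_eq0.
  by apply: contra y_neq0 => /andP[/eqP -> /eqP ->].
have [k0 [k0_gt0 growth]] := sums_grow_like_sqrt m_ge1 N0.
exists k0; split => // k k_gt0 le_kk0.
have [C [C_gt0 [T0 sums_ge]]] := growth k k_gt0 le_kk0.
exists C; split => //; exists T0 => T le_T0T x1 x2 traj.
have [x1_1 x2_1 _] := traj.
have := sums_ge T le_T0T _ _ (oftrl_delayed_rotation traj).
move=> /(_ (congr1 (dot^~ mp_c) x1_1) (congr1 (dot^~ mp_c) x2_1)) ge_sqrt.
apply: le_trans (regret_ge_sums T x1 x2).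
rewrite mulrAC (mulrC _ (Dsize T x1 x2)).
by apply: ler_wpM2l ge_sqrt; rewrite /Dsize le_min !radius_ge0.
Qed.
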